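(* Let $T:l_\infty\to l_\infty$ be a continuous positive linear map with adjoint $T^*$. Suppose (i) for every sequence $(A_n)$ of subsets of $\mathbb N$ with $(A_n)\downarrow\emptyset$, $T(\mathbb I_{A_n})$ converges to $0$ coordinatewise; and (ii) for every $n\in\mathbb N$ there is a finite set $E_n\subseteq\mathbb N$ containing the support of $T(\mathbb I_{\{n\}})$. Then $T^*$ is a Yosida–Hewitt transformation, i.e. $T^*(\mu)\in ca(\mathbb N)$ for every $\mu\in ca(\mathbb N)$ and $T^*(\mu)\in pa(\mathbb N)$ for every $\mu\in pa(\mathbb N)$.
   Context: $l_\infty$: real bounded sequences indexed by $\mathbb N$. $\mathbb I_A$ is the indicator sequence of $A\subseteq\mathbb N$. $(A_n)\downarrow\emptyset$ means $A_n\supseteq A_{n+1}$ and $\bigcap_nA_n=\emptyset$. $ba(\mathbb N)$: norm dual of $l_\infty$ (bounded finitely additive signed measures on $2^{\mathbb N}$), pairing $\langle x,\mu\rangle$. The adjoint $T^*$ satisfies $\langle x,T^*(\mu)\rangle=\langle T(x),\mu\rangle$. $ca(\mathbb N)$ is the set of countably additive elements of $ba(\mathbb N)$; $pa(\mathbb N)$ is the set of purely finitely additive elements, i.e. $\mu$ with $\mu(\{n\})=0$ for every $n\in\mathbb N$. *)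

From Stdlib Require Export Reals List.
Open Scope R_scope.

(* Real sequences indexed by N; l_infty = the bounded ones. *)
Definition seqR := nat -> R.
Definition bounded (x : seqR) : Prop := exists M, forall n, Rabs (x n) <= M.

Definition subset_N := nat -> bool.
Definition indic (A : subset_N) : seqR := fun n => if A n then 1 else 0.
Definition singleton (k : nat) : subset_N := fun m => Nat.eqb m k.

Definition linf_continuous (T : seqR -> seqR) : Prop :=
  forall x, bounded x -> forall eps, 0 < eps -> exists delta, 0 < delta /\
    forall y, bounded y -> (forall n, Rabs (x n - y n) <= delta) ->
      forall n, Rabs (T x n - T y n) <= eps.

Definition linf_linear (T : seqR -> seqR) : Prop :=
  forall x y a b, bounded x -> bounded y ->
    forall n, T (fun k => a * x k + b * y k) n = a * T x n + b * T y n.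

Definition linf_positive (T : seqR -> seqR) : Prop :=
  forall x, bounded x -> (forall n, 0 <= x n) -> forall n, 0 <= T x n.

Definition cont_pos_linear_op (T : seqR -> seqR) : Prop :=
  (forall x, bounded x -> bounded (T x)) /\ linf_linear T /\
  linf_continuous T /\ linf_positive T.

Definition linf_dual (phi : seqR -> R) : Prop :=
  (forall x y a b, bounded x -> bounded y ->
     phi (fun k => a * x k + b * y k) = a * phi x + b * phi y) /\
  (forall x, bounded x -> forall eps, 0 < eps -> exists delta, 0 < delta /\
     forall y, bounded y -> (forall n, Rabs (x n - y n) <= delta) ->
       Rabs (phi x - phi y) <= eps).

(* The identification l_infty^* = ba(N): phi corresponds to the bounded finitely
   additive measure A |-> <I_A, phi> = phi (I_A). *)
Definition ba_of (phi : seqR -> R) : subset_N -> R := fun A => phi (indic A).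

Definition adjoint (T : seqR -> seqR) (phi : seqR -> R) : seqR -> R :=
  fun x => phi (T x).

Definition is_ca (mu : subset_N -> R) : Prop :=
  forall (A : nat -> subset_N) (B : subset_N),
    (forall i j n, i <> j -> A i n = true -> A j n = false) ->
    (forall n, B n = true <-> exists k, A k n = true) ->
    infinite_sum (fun k => mu (A k)) (mu B).

Definition is_pa (mu : subset_N -> R) : Prop :=
  forall n, mu (singleton n) = 0.

Definition yosida_hewitt (S : (seqR -> R) -> (seqR -> R)) : Prop :=
  (forall phi, linf_dual phi -> is_ca (ba_of phi) -> is_ca (ba_of (S phi))) /\
  (forall phi, linf_dual phi -> is_pa (ba_of phi) -> is_pa (ba_of (S phi))).

Definition decr_to_empty (A : nat -> subset_N) : Prop :=
  (forall n m, A (S n) m = true -> A n m = true) /\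
  (forall m, exists n, A n m = false).

From Stdlib Require Import Reals Lra Lia FunctionalExtensionality Bool.
Open Scope R_scope.

(* Write nu A = phi (T I_A) for nu = T^* phi.  Countable additivity of nu amounts to
   nu (C n) -> 0 whenever C n decreases to the empty set.  By (i) and positivity, the
   sequences T I_(C n) tend to 0 pointwise and are dominated by T I_(C 0), so what is needed
   is dominated convergence for a countably additive phi: cut at K; the head is a finite
   sum over point masses, and the tail is at most M times the variation of phi on [K, oo),
   which tends to 0.  The tail estimate comes from the Hahn decomposition of phi by the sign
   of its point masses together with a uniform staircase approximation and the continuity
   of phi.  For pure finite additivity, (ii) makes T I_{n} finitely supported, so
   phi (T I_{n}) is a finite combination of the point masses of phi, all of which vanish. *)

Lemma congr_pointwise {A B : Type} (f : (nat -> A) -> B) (x y : nat -> A) :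
  (forall k, x k = y k) -> f x = f y.
Proof. intros H; f_equal; apply functional_extensionality; exact H. Qed.

Lemma bounded_of_range (x : seqR) (M : R) : (forall n : nat, 0 <= x n <= M) -> bounded x.
Proof. intros H; exists M; intros n; specialize (H n); rewrite Rabs_pos_eq; lra. Qed.

Lemma bounded_indic (A : subset_N) : bounded (indic A).
Proof. apply (bounded_of_range _ 1); intros n; unfold indic; destruct (A n); lra. Qed.

Lemma bounded_add (x y : seqR) : bounded x -> bounded y -> bounded (fun k => x k + y k).
Proof.
  intros [M1 H1] [M2 H2]; exists (M1 + M2); intros n.
  pose proof (Rabs_triang (x n) (y n)); specialize (H1 n); specialize (H2 n); lra.
Qed.

Lemma bounded_scal (x : seqR) (a : R) : bounded x -> bounded (fun k => a * x k).
Proof.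
  intros [M H]; exists (Rabs a * M); intros n; rewrite Rabs_mult.
  apply Rmult_le_compat_l; auto using Rabs_pos.
Qed.

Fixpoint sum_below (f : nat -> R) (K : nat) : R :=
  match K with O => 0 | S K => sum_below f K + f K end.

Lemma bounded_sum_below (f : nat -> seqR) (J : nat) :
  (forall j, bounded (f j)) -> bounded (fun m => sum_below (fun j => f j m) J).
Proof.
  intros Hf; induction J as [|J IH]; simpl.
  - apply (bounded_of_range _ 0); intros; lra.
  - apply bounded_add; auto.
Qed.

Lemma sum_below_abs_le (f : nat -> R) (J : nat) (B : R) :
  (forall j, Rabs (f j) <= B) -> Rabs (sum_below f J) <= INR J * B.
Proof.
  intros Hf; induction J as [|J IH]; simpl sum_below.
  - rewrite Rabs_R0; simpl; lra.
  - rewrite S_INR; pose proof (Rabs_triang (sum_below f J) (f J)); specialize (Hf J); lra.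
Qed.

Lemma cv_const (c : R) : Un_cv (fun _ => c) c.
Proof.
  intros eps Heps; exists O; intros; unfold R_dist; rewrite Rminus_diag, Rabs_R0; exact Heps.
Qed.

Lemma sum_below_cv (f : nat -> nat -> R) (K : nat) :
  (forall k, Un_cv (fun N => f N k) 0) -> Un_cv (fun N => sum_below (f N) K) 0.
Proof.
  intros H; induction K as [|K IH]; simpl.
  - apply cv_const.
  - rewrite <- (Rplus_0_r 0); apply CV_plus; auto.
Qed.

Definition additive (nu : subset_N -> R) : Prop :=
  forall D1 D2 : subset_N, (forall n, D1 n = true -> D2 n = false) ->
    nu (fun n => D1 n || D2 n) = nu D1 + nu D2.

Section DualElement.
Variable phi : seqR -> R.
Hypothesis Hphi : linf_dual phi.

Lemma phi_add (x y : seqR) :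
  bounded x -> bounded y -> phi (fun k => x k + y k) = phi x + phi y.
Proof.
  intros bx by_; destruct Hphi as [Hlin _].
  rewrite <- (Rmult_1_l (phi x)), <- (Rmult_1_l (phi y)), <- Hlin by assumption.
  apply (congr_pointwise phi); intros; ring.
Qed.

Lemma phi_scal (x : seqR) (a : R) : bounded x -> phi (fun k => a * x k) = a * phi x.
Proof.
  intros bx; destruct Hphi as [Hlin _].
  transitivity (a * phi x + 0 * phi x); [|ring].
  rewrite <- Hlin by assumption; apply (congr_pointwise phi); intros; ring.
Qed.

Lemma phi_zero : phi (fun _ => 0) = 0.
Proof.
  transitivity (0 * phi (indic (fun _ => false))); [|ring].
  rewrite <- phi_scal by apply bounded_indic.
  apply (congr_pointwise phi); intros; ring.
Qed.

Lemma phi_sum_below (f : nat -> seqR) (J : nat) : (forall j, bounded (f j)) ->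
  phi (fun m => sum_below (fun j => f j m) J) = sum_below (fun j => phi (f j)) J.
Proof.
  intros Hf; induction J as [|J IH]; simpl.
  - exact phi_zero.
  - rewrite phi_add, IH; auto using bounded_sum_below.
Qed.

Lemma ba_of_additive : additive (ba_of phi).
Proof.
  intros D1 D2 Hdisj; unfold ba_of.
  rewrite <- phi_add by apply bounded_indic.
  apply (congr_pointwise phi); intros k; unfold indic.
  destruct (D1 k) eqn:E1; simpl.
  - rewrite (Hdisj k E1); ring.
  - destruct (D2 k); ring.
Qed.

End DualElement.

Lemma adjoint_linf_dual (T : seqR -> seqR) (phi : seqR -> R) :
  (forall x, bounded x -> bounded (T x)) -> linf_linear T -> linf_continuous T ->
  linf_dual phi -> linf_dual (adjoint T phi).
Proof.
  intros Tb Tl Tc [Hlin Hcont]; unfold adjoint; split.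
  - intros x y a b bx by_.
    rewrite <- Hlin by auto.
    apply (congr_pointwise phi); intros n; apply Tl; assumption.
  - intros x bx eps Heps.
    destruct (Hcont (T x) (Tb x bx) eps Heps) as [delta1 [Hd1 Hphi1]].
    destruct (Tc x bx delta1 Hd1) as [delta [Hd HT1]].
    exists delta; split; [exact Hd|].
    intros y by_ Hxy; apply Hphi1; auto.
Qed.

Lemma positive_linear_monotone (T : seqR -> seqR) (x y : seqR) :
  linf_linear T -> linf_positive T -> bounded x -> bounded y ->
  (forall k, x k <= y k) -> forall n, T x n <= T y n.
Proof.
  intros Tl Tp bx by_ Hxy n.
  assert (H : 0 <= T (fun k => 1 * y k + (-1) * x k) n).
  { apply Tp; [apply bounded_add; apply bounded_scal; assumption|].
    intros k; specialize (Hxy k); lra. }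
  rewrite Tl in H by assumption; lra.
Qed.

Lemma infinite_sum_iff_remainder_cv (a r : nat -> R) (L : R) :
  (forall n, L = sum_f_R0 a n + r (S n)) -> (infinite_sum a L <-> Un_cv r 0).
Proof.
  intros Hrem; split; intros H eps Heps; destruct (H eps Heps) as [N HN]; unfold R_dist in *.
  - exists (S N); intros [|n] Hn; [lia|].
    replace (r (S n) - 0) with (- (sum_f_R0 a n - L)) by (rewrite (Hrem n); ring).
    rewrite Rabs_Ropp; apply HN; lia.
  - exists N; intros n Hn.
    replace (sum_f_R0 a n - L) with (- (r (S n) - 0)) by (rewrite (Hrem n); ring).
    rewrite Rabs_Ropp; apply HN; lia.
Qed.

Lemma decr_le (C : nat -> subset_N) : (forall n m, C (S n) m = true -> C n m = true) ->
  forall i j m, (i <= j)%nat -> C j m = true -> C i m = true.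
Proof. intros Hdec i j m Hij; induction Hij; auto. Qed.

Definition tail (K : nat) (P : subset_N) : subset_N := fun m => Nat.leb K m && P m.

Lemma tail_decr_to_empty (P : subset_N) : decr_to_empty (fun K => tail K P).
Proof.
  unfold tail; split.
  - intros n m H; apply andb_prop in H as [H1 H2]; apply Nat.leb_le in H1.
    rewrite H2, andb_true_r; apply Nat.leb_le; lia.
  - intros m; exists (S m); replace (Nat.leb (S m) m) with false; [reflexivity|].
    symmetry; apply Nat.leb_gt; lia.
Qed.

Fixpoint remaining (A : nat -> subset_N) (B : subset_N) (N : nat) : subset_N :=
  match N with O => B | S N => fun m => remaining A B N m && negb (A N m) end.

Section AdditiveSetFunction.
Variable nu : subset_N -> R.
Hypothesis Hadd : additive nu.

Lemma additive_telescope (A C : nat -> subset_N) :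
  (forall k m, C k m = A k m || C (S k) m) ->
  (forall k m, A k m = true -> C (S k) m = false) ->
  forall n, nu (C O) = sum_f_R0 (fun k => nu (A k)) n + nu (C (S n)).
Proof.
  intros Hsplit Hdisj.
  assert (Hstep : forall k, nu (C k) = nu (A k) + nu (C (S k))).
  { intros k; rewrite <- Hadd by apply Hdisj; apply (congr_pointwise nu), Hsplit. }
  induction n as [|n IH]; simpl.
  - apply Hstep.
  - rewrite IH, (Hstep (S n)); ring.
Qed.

Lemma is_ca_of_cv_empty :
  (forall C, decr_to_empty C -> Un_cv (fun n => nu (C n)) 0) -> is_ca nu.
Proof.
  intros Hcv A B Hdisj HB.
  set (C := remaining A B).
  assert (HAC : forall k m, A k m = true -> forall N, (N <= k)%nat -> C N m = true).
  { intros k m Hk; induction N as [|N IH]; intros HN.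
    - apply HB; eauto.
    - change (C N m && negb (A N m) = true); rewrite IH by lia.
      destruct (A N m) eqn:E; [|reflexivity].
      rewrite (Hdisj N k m) in Hk by (auto; lia); discriminate. }
  assert (Hdecr : decr_to_empty C).
  { split.
    - intros n m H; apply andb_prop in H; tauto.
    - intros m; destruct (B m) eqn:Bm.
      + destruct (proj1 (HB m) Bm) as [k Hk]; exists (S k).
        change (C k m && negb (A k m) = false); rewrite Hk, andb_false_r; reflexivity.
      + exists O; exact Bm. }
  apply (infinite_sum_iff_remainder_cv _ (fun n => nu (C n))); [|exact (Hcv C Hdecr)].
  intros n; apply (additive_telescope A C).
  - intros k m; change (C (S k) m) with (C k m && negb (A k m)); destruct (A k m) eqn:E.
    + rewrite (HAC k m E k (le_n k)); reflexivity.
    + rewrite andb_true_r; reflexivity.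
  - intros k m Hk; change (C k m && negb (A k m) = false); rewrite Hk, andb_false_r; reflexivity.
Qed.

Lemma cv_empty_of_is_ca :
  is_ca nu -> forall C, decr_to_empty C -> Un_cv (fun n => nu (C n)) 0.
Proof.
  intros Hca C [Hdec Hemp].
  set (A := fun k m => C k m && negb (C (S k) m)).
  apply (infinite_sum_iff_remainder_cv (fun k => nu (A k)) _ (nu (C O))).
  - apply additive_telescope; unfold A.
    + intros k m; destruct (C (S k) m) eqn:E.
      * rewrite (Hdec k m E), orb_true_r; reflexivity.
      * rewrite andb_true_r, orb_false_r; reflexivity.
    + intros k m H; apply andb_prop in H as [_ H]; apply negb_true_iff, H.
  - apply Hca.
    + intros i j n Hij Hi; unfold A in *; apply andb_prop in Hi as [Hi1 Hi2].
      destruct (C j n) eqn:Cj; [|reflexivity].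
      destruct (Nat.lt_gt_cases i j) as [[Hlt|Hlt] _]; [exact Hij| |].
      * rewrite (decr_le C Hdec (S i) j n Hlt Cj) in Hi2; discriminate.
      * rewrite (decr_le C Hdec (S j) i n Hlt Hi1); reflexivity.
    + intros n; split.
      * intros H0; destruct (Hemp n) as [N HN]; revert HN.
        induction N as [|N IH]; intros HN; [congruence|].
        destruct (C N n) eqn:E; [|auto].
        exists N; unfold A; rewrite E, HN; reflexivity.
      * intros [k Hk]; apply andb_prop in Hk as [Hk _].
        apply (decr_le C Hdec 0 k n); [lia | exact Hk].
Qed.

End AdditiveSetFunction.

Definition level (h : R) (z : seqR) (j : nat) : subset_N :=
  fun m => if Rle_dec (INR (S j) * h) (z m) then true else false.

Definition staircase (h : R) (J : nat) (z : seqR) : seqR :=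
  fun m => sum_below (fun j => indic (level h z j) m) J.

Lemma staircase_bounds (h : R) (J : nat) (z : seqR) (m : nat) : 0 < h -> 0 <= z m ->
  Rmin (z m - h) (INR J * h) <= h * staircase h J z m <= Rmin (z m) (INR J * h).
Proof.
  intros Hh Hz; unfold staircase; induction J as [|J IH]; simpl sum_below.
  - simpl; unfold Rmin; repeat destruct Rle_dec; lra.
  - set (s := sum_below (fun j => indic (level h z j) m) J) in *.
    assert (Hlev : indic (level h z J) m = 1 /\ (INR J + 1) * h <= z m \/
                   indic (level h z J) m = 0 /\ z m < (INR J + 1) * h).
    { unfold indic, level; rewrite <- S_INR; destruct Rle_dec; [left|right]; split; lra. }
    rewrite S_INR; destruct Hlev as [[-> Hle] | [-> Hlt]]; revert IH; unfold Rmin;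
      repeat destruct Rle_dec; intros; lra.
Qed.

Definition truncate (K : nat) (z : seqR) : seqR := fun m => if Nat.ltb m K then z m else 0.

Lemma phi_truncate (phi : seqR -> R) (z : seqR) (K : nat) : linf_dual phi ->
  phi (truncate K z) = sum_below (fun k => z k * ba_of phi (singleton k)) K.
Proof.
  intros Hphi.
  transitivity (phi (fun m => sum_below (fun k => z k * indic (singleton k) m) K)).
  - apply (congr_pointwise phi); intros m; unfold truncate.
    induction K as [|K IH]; simpl; [reflexivity|].
    rewrite <- IH; unfold indic, singleton.
    destruct (Nat.ltb_spec m (S K)), (Nat.ltb_spec m K), (Nat.eqb_spec m K);
      subst; try lia; ring.
  - rewrite phi_sum_below; [|exact Hphi|intros; apply bounded_scal, bounded_indic].
    induction K as [|K IH]; simpl; [reflexivity|].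
    rewrite IH, phi_scal; [reflexivity|exact Hphi|apply bounded_indic].
Qed.

Section CountablyAdditiveElement.
Variable phi : seqR -> R.
Hypothesis Hphi : linf_dual phi.
Hypothesis Hca : is_ca (ba_of phi).

Lemma ba_of_series (D : subset_N) :
  infinite_sum (fun k => if D k then ba_of phi (singleton k) else 0) (ba_of phi D).
Proof.
  assert (Hsum : infinite_sum (fun k => ba_of phi (fun n => D k && Nat.eqb n k)) (ba_of phi D)).
  { apply Hca.
    - intros i j n Hij Hi; apply andb_prop in Hi as [_ Hi]; apply Nat.eqb_eq in Hi; subst.
      rewrite andb_false_intro2; [reflexivity|]; apply Nat.eqb_neq; auto.
    - intros n; split.
      + intros Hn; exists n; rewrite Hn, Nat.eqb_refl; reflexivity.
      + intros [k Hk]; apply andb_prop in Hk as [Hk Hnk].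
        apply Nat.eqb_eq in Hnk; subst; exact Hk. }
  intros eps Heps; destruct (Hsum eps Heps) as [N HN]; exists N; intros n Hn.
  erewrite sum_eq; [apply HN, Hn|]; intros k _; simpl.
  destruct (D k); [reflexivity|].
  unfold ba_of; rewrite <- (phi_zero phi Hphi); reflexivity.
Qed.

(* Hahn decomposition of [ba_of phi] by the sign of its point masses. *)
Definition nonneg_mass : subset_N :=
  fun k => if Rle_dec 0 (ba_of phi (singleton k)) then true else false.

Definition tail_variation (K : nat) : R :=
  ba_of phi (tail K nonneg_mass) - ba_of phi (tail K (fun m => negb (nonneg_mass m))).

Lemma ba_of_tail_bounds (D : subset_N) (K : nat) : (forall m, D m = true -> (K <= m)%nat) ->
  ba_of phi (tail K (fun m => negb (nonneg_mass m))) <= ba_of phi D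
  <= ba_of phi (tail K nonneg_mass).
Proof.
  intros HD; split; (eapply Rle_cv_lim; [|apply ba_of_series|apply ba_of_series]);
    intros n; apply sum_Rle; intros k _; unfold tail, nonneg_mass;
    specialize (HD k); destruct (D k), Rle_dec, (Nat.leb_spec K k); simpl;
    try lra; specialize (HD eq_refl); lia.
Qed.

Lemma abs_ba_of_tail_le (D : subset_N) (K : nat) : (forall m, D m = true -> (K <= m)%nat) ->
  Rabs (ba_of phi D) <= tail_variation K.
Proof.
  intros HD.
  assert (Hempty : ba_of phi (fun _ => false) = 0).
  { unfold ba_of; rewrite <- (phi_zero phi Hphi); reflexivity. }
  pose proof (ba_of_tail_bounds D K HD) as HDb.
  pose proof (ba_of_tail_bounds (fun _ => false) K ltac:(discriminate)) as H0.
  unfold tail_variation; rewrite Hempty in H0; apply Rabs_le; lra.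
Qed.

Lemma tail_variation_cv : Un_cv tail_variation 0.
Proof.
  rewrite <- (Rminus_0_r 0); apply CV_minus;
    apply (cv_empty_of_is_ca _ (ba_of_additive phi Hphi) Hca), tail_decr_to_empty.
Qed.

Lemma abs_phi_tail_le (z : seqR) (M : R) (K : nat) : 0 < M ->
  (forall m, 0 <= z m <= M) -> (forall m, (m < K)%nat -> z m = 0) ->
  Rabs (phi z) <= M * tail_variation K.
Proof.
  intros HM Hz HK; apply Rle_plus_epsilon; intros eps Heps.
  destruct (proj2 Hphi z (bounded_of_range z M Hz) eps Heps) as [delta [Hd Hcont]].
  destruct (archimed_cor1 (delta / M)) as [J [HJ HJpos]]; [apply Rdiv_lt_0_compat; lra|].
  apply lt_0_INR in HJpos.
  set (h := M / INR J).
  assert (Hh : 0 < h) by (apply Rdiv_lt_0_compat; lra).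
  assert (HJh : INR J * h = M) by (unfold h; field; lra).
  assert (Hhd : h < delta).
  { unfold h, Rdiv; apply (Rmult_lt_reg_l (/ M)); [apply Rinv_0_lt_compat; lra|].
    replace (/ M * (M * / INR J)) with (/ INR J) by (field; lra).
    replace (/ M * delta) with (delta / M) by (field; lra); exact HJ. }
  set (s := fun m => h * staircase h J z m).
  assert (bs : bounded s) by (apply bounded_scal, bounded_sum_below; intros; apply bounded_indic).
  assert (Hzs : forall m, Rabs (z m - s m) <= delta).
  { intros m; pose proof (staircase_bounds h J z m Hh (proj1 (Hz m))) as Hst.
    specialize (Hz m); rewrite HJh in Hst; unfold s; revert Hst; unfold Rmin.
    repeat destruct Rle_dec; intros; apply Rabs_le; lra. }
  assert (Hs : Rabs (phi s) <= M * tail_variation K).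
  { unfold s, staircase.
    rewrite phi_scal, phi_sum_below; auto using bounded_indic, bounded_sum_below.
    rewrite Rabs_mult, Rabs_pos_eq, <- HJh by lra.
    replace (INR J * h * tail_variation K) with (h * (INR J * tail_variation K)) by ring.
    apply Rmult_le_compat_l; [lra|]; apply sum_below_abs_le; intros j.
    apply abs_ba_of_tail_le; intros m Hm.
    unfold level in Hm; destruct Rle_dec as [r|]; [|discriminate].
    destruct (Nat.lt_ge_cases m K) as [Hlt|]; [|assumption].
    rewrite HK in r by exact Hlt; pose proof (lt_0_INR (S j) (Nat.lt_0_succ j)); nra. }
  specialize (Hcont s bs Hzs); pose proof (Rabs_triang_inv (phi z) (phi s)); lra.
Qed.

End CountablyAdditiveElement.

Lemma dominated_cv (phi : seqR -> R) (y : nat -> seqR) (M : R) :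
  linf_dual phi -> is_ca (ba_of phi) ->
  (forall N m, 0 <= y N m <= M) -> (forall m, Un_cv (fun N => y N m) 0) ->
  Un_cv (fun N => phi (y N)) 0.
Proof.
  intros Hphi Hca Hy Hcv eps Heps.
  assert (HM : 0 <= M) by (specialize (Hy O O); lra).
  destruct (tail_variation_cv phi Hphi Hca (eps / (2 * (M + 1)))) as [K HK];
    [apply Rdiv_lt_0_compat; lra|].
  specialize (HK K (le_n K)); unfold R_dist in HK; rewrite Rminus_0_r in HK.
  apply Rabs_def2 in HK as [HK _].
  assert (Hhead : Un_cv (fun N => phi (truncate K (y N))) 0).
  { intros e He; setoid_rewrite (phi_truncate phi _ K Hphi); revert e He.
    apply (sum_below_cv (fun N k => y N k * ba_of phi (singleton k))); intros k.
    rewrite <- (Rmult_0_l (ba_of phi (singleton k))); apply CV_mult; [apply Hcv|apply cv_const]. }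
  destruct (Hhead (eps / 2)) as [N0 HN0]; [lra|].
  exists N0; intros N HN; specialize (HN0 N HN); unfold R_dist in *; rewrite Rminus_0_r in *.
  set (rest := fun m => y N m - truncate K (y N) m).
  assert (Hsplit : phi (y N) = phi (truncate K (y N)) + phi rest).
  { rewrite <- phi_add; [|exact Hphi|..].
    - apply (congr_pointwise phi); intros m; unfold rest; ring.
    - apply (bounded_of_range _ M); intros m; unfold truncate; specialize (Hy N m);
        destruct Nat.ltb; lra.
    - apply (bounded_of_range _ M); intros m; unfold rest, truncate; specialize (Hy N m);
        destruct Nat.ltb; lra. }
  assert (Hrest : Rabs (phi rest) <= (M + 1) * tail_variation phi K).
  { apply abs_phi_tail_le; auto; [lra|..]; intros m; unfold rest, truncate; specialize (Hy N m).
    - destruct Nat.ltb; lra.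
    - intros Hm; apply Nat.ltb_lt in Hm; rewrite Hm; ring. }
  assert ((M + 1) * tail_variation phi K < eps / 2).
  { apply (Rmult_lt_compat_l (M + 1)) in HK; [|lra].
    replace ((M + 1) * (eps / (2 * (M + 1)))) with (eps / 2) in HK by (field; lra); exact HK. }
  rewrite Hsplit; pose proof (Rabs_triang (phi (truncate K (y N))) (phi rest)); lra.
Qed.

Section PositiveOperator.
Variable T : seqR -> seqR.
Hypothesis HT : cont_pos_linear_op T.

Lemma adjoint_preserves_ca (phi : seqR -> R) :
  (forall A, decr_to_empty A -> forall m, Un_cv (fun n => T (indic (A n)) m) 0) ->
  linf_dual phi -> is_ca (ba_of phi) -> is_ca (ba_of (adjoint T phi)).
Proof.
  destruct HT as [Tb [Tl [Tc Tp]]]; intros Hseq Hphi Hca.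
  apply is_ca_of_cv_empty; [apply ba_of_additive, adjoint_linf_dual; assumption|].
  intros C [Hdec Hemp].
  destruct (Tb _ (bounded_indic (C O))) as [M HM].
  apply (dominated_cv phi (fun N => T (indic (C N))) M Hphi Hca).
  2: { apply Hseq; split; assumption. }
  intros N m; split.
  - apply Tp; [apply bounded_indic|]; intros k; unfold indic; destruct (C N k); lra.
  - apply (Rle_trans _ (T (indic (C O)) m)).
    2: { specialize (HM m); pose proof (Rle_abs (T (indic (C O)) m)); lra. }
    apply positive_linear_monotone; auto using bounded_indic.
    intros k; unfold indic; destruct (C N k) eqn:E; [|destruct (C O k); lra].
    rewrite (decr_le C Hdec O N k (Nat.le_0_l N) E); lra.
Qed.

Lemma adjoint_preserves_pa (phi : seqR -> R) :
  (forall n, exists E : list nat, forall m, T (indic (singleton n)) m <> 0 -> In m E) ->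
  linf_dual phi -> is_pa (ba_of phi) -> is_pa (ba_of (adjoint T phi)).
Proof.
  intros Hsupp Hphi Hpa n; unfold ba_of, adjoint.
  destruct (Hsupp n) as [E HE].
  set (z := T (indic (singleton n))).
  set (K := S (list_max E)).
  transitivity (phi (truncate K z)).
  - apply (congr_pointwise phi); intros m; unfold truncate.
    destruct (Nat.ltb_spec m K) as [|HmK]; [reflexivity|].
    destruct (Req_dec (z m) 0) as [|Hzm]; [assumption|].
    pose proof (proj1 (list_max_le E (list_max E)) (le_n _)) as Hmax.
    rewrite Forall_forall in Hmax; specialize (Hmax m (HE m Hzm)); unfold K in HmK; lia.
  - rewrite phi_truncate by exact Hphi.
    induction K as [|K IH]; simpl; [reflexivity|].
    rewrite IH, Hpa; ring.
Qed.

End PositiveOperator.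

Theorem lemma3 (T : seqR -> seqR) :
  cont_pos_linear_op T ->
  (forall A : nat -> subset_N, decr_to_empty A ->
     forall m, Un_cv (fun n => T (indic (A n)) m) 0) ->
  (forall n : nat, exists E : list nat,
     forall m, T (indic (singleton n)) m <> 0 -> In m E) ->
  yosida_hewitt (adjoint T).
Proof.
  intros HT Hseq Hsupp; split; intros phi Hphi.
  - apply adjoint_preserves_ca; assumption.
  - apply adjoint_preserves_pa; assumption.
Qed.
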